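(* Let $Q$ be a CQ query and $\Sigma$ a finite regularized set of embedded dependencies such that the set-chase result $(Q)_{\Sigma,S}$ exists. Then $(Q)_{\Sigma,S}\sqsubseteq_S(Q)_{\Sigma,BS}\sqsubseteq_S(Q)_{\Sigma,B}\sqsubseteq_S Q$.
   Context: A CQ query is $Q(\bar X):-p_1(\bar X_1),\dots,p_n(\bar X_n)$. $Q_1\sqsubseteq_S Q_2$ (set containment) means $Q_1(D,S)\subseteq Q_2(D,S)$ for every set-valued instance $D$, where $Q(D,S)$ is the set of $\gamma(\bar X)$ over assignments $\gamma$ with each $\gamma(\bar X_i)$ in the relation of $p_i$. Bag-set semantics: one copy of $\gamma(\bar X)$ per satisfying assignment, on set-valued instances; bag semantics: each satisfying $\gamma$ contributes the product of the multiplicities of the matched tuples, on bag-valued instances. Embedded dependencies: tgds $\phi(\bar U,\bar W)\to\exists\bar V\psi(\bar U,\bar V)$, egds $\phi(\bar U)\to U_1=U_2$; tgd chase step via homomorphism $h:\phi\to$ body not extendable to $\phi\wedge\psi$, adding $\psi(h(\bar U),\bar V)$ with fresh $\bar V$; egd step via $h$ with $h(U_1)\ne h(U_2)$, $h(U_1)$ a variable, replacing $h(U_1)$ by $h(U_2)$. $(Q)_{\Sigma,S}$ is the final query of a set-chase sequence whose canonical database (variables replaced by distinct constants) satisfies $\Sigma$. Regularized: no tgd's right-hand-side atoms split into two nonempty parts sharing only universally quantified variables. A chase step is sound under bag (resp. bag-set) semantics if it preserves answers under that semantics on all instances of the respective kind satisfying $\Sigma$ (under bag semantics removal of duplicate subgoals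 over relations required set valued is also permitted); $(Q)_{\Sigma,B}$ (resp. $(Q)_{\Sigma,BS}$) is the last query of a chase sequence from $Q$ with all steps sound under that semantics, to which no further sound step applies. *)

From Stdlib Require Import Bool List Arith PeanoNat Relations Permutation.
Import ListNotations.

Inductive term : Type := TVar (x : nat) | TCst (c : nat).

Record atom : Type := mkAtom { apred : nat; aargs : list term }.

(* a CQ  Q(head) :- body ; the body is a list (duplicate subgoals matter
   under bag semantics) *)
Record query : Type := mkQuery { qhead : list term; qbody : list atom }.

Definition tvars (t : term) : list nat :=
  match t with TVar x => [x] | TCst _ => [] end.
Definition avars (a : atom) : list nat := flat_map tvars (aargs a).
Definition bvars (b : list atom) : list nat := flat_map avars b.
Definition qvars (Q : query) : list nat :=
  nodup Nat.eq_dec (flat_map tvars (qhead Q) ++ bvars (qbody Q)).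
Definition tconsts (t : term) : list nat :=
  match t with TVar _ => [] | TCst c => [c] end.
Definition qconsts (Q : query) : list nat :=
  flat_map tconsts (qhead Q) ++ flat_map (fun a => flat_map tconsts (aargs a)) (qbody Q).

Definition safe (Q : query) : Prop :=
  forall x, In x (flat_map tvars (qhead Q)) -> In x (bvars (qbody Q)).

Record datom : Type := mkDAtom { dpred : nat; dargs : list nat }.
Definition dvars (l : list datom) : list nat := flat_map dargs l.

(* tgd  phi -> exists V, psi   (universal vars = vars of phi,
                                existential vars = vars of psi not in phi)
   egd  phi -> U1 = U2 *)
Inductive dependency : Type :=
| TGD (phi psi : list datom)
| EGD (phi : list datom) (u1 u2 : nat).

Definition wf_dep (d : dependency) : Prop :=
  match d with
  | TGD _ _ => True
  | EGD phi u1 u2 => In u1 (dvars phi) /\ In u2 (dvars phi)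
  end.

Definition regularized (Sigma : list dependency) : Prop :=
  forall phi psi, In (TGD phi psi) Sigma ->
    ~ exists psi1 psi2,
        Permutation (psi1 ++ psi2) psi /\ psi1 <> [] /\ psi2 <> [] /\
        (forall x, In x (dvars psi1) -> In x (dvars psi2) -> In x (dvars phi)).

Definition fact : Type := (nat * list nat)%type.
Definition fact_eq_dec : forall f g : fact, {f = g} + {f <> g}.
Proof. decide equality; [apply list_eq_dec, Nat.eq_dec | apply Nat.eq_dec]. Defined.

(* An instance is a finite list of facts.  As a set-valued instance, only
   membership matters; as a bag-valued instance, the multiplicity of a fact is
   its number of occurrences. *)
Definition instance : Type := list fact.

Definition eval (g : nat -> nat) (t : term) : nat :=
  match t with TVar x => g x | TCst c => c end.
Definition ifact (g : nat -> nat) (a : atom) : fact := (apred a, map (eval g) (aargs a)).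
Definition dfact (g : nat -> nat) (a : datom) : fact := (dpred a, map g (dargs a)).

Definition ans_set (Q : query) (D : instance) (t : list nat) : Prop :=
  exists g : nat -> nat, map (eval g) (qhead Q) = t /\
    forall a, In a (qbody Q) -> In (ifact g a) D.

Definition set_contained (Q1 Q2 : query) : Prop :=
  forall (D : instance) (t : list nat), ans_set Q1 D t -> ans_set Q2 D t.

Fixpoint tuples (cands : list nat) (n : nat) : list (list nat) :=
  match n with
  | 0 => [[]]
  | S n' => flat_map (fun c => map (cons c) (tuples cands n')) cands
  end.
Fixpoint assoc (vs l : list nat) (v : nat) : nat :=
  match vs, l with
  | x :: vs', c :: l' => if Nat.eqb x v then c else assoc vs' l' v
  | _, _ => 0
  end.
Definition adom (D : instance) : list nat := flat_map snd D.

(* Every assignment gamma of the variables of Q with gamma(head) = t and with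
   body satisfied takes values in adom(D) (body variables) or in t (head
   variables); so summing over all maps vars(Q) -> nodup(adom D ++ t) sums over
   exactly the relevant assignments, each once. *)
Definition assignments (Q : query) (D : instance) (t : list nat) : list (nat -> nat) :=
  map (assoc (qvars Q))
      (tuples (nodup Nat.eq_dec (adom D ++ t)) (length (qvars Q))).

Definition head_ok (Q : query) (g : nat -> nat) (t : list nat) : bool :=
  if list_eq_dec Nat.eq_dec (map (eval g) (qhead Q)) t then true else false.

Definition mult_bag (Q : query) (D : instance) (t : list nat) : nat :=
  list_sum (map (fun g => if head_ok Q g t then
        fold_right Nat.mul 1 (map (fun a => count_occ fact_eq_dec D (ifact g a)) (qbody Q))
      else 0) (assignments Q D t)).

Definition mult_bagset (Q : query) (D : instance) (t : list nat) : nat :=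
  list_sum (map (fun g => if head_ok Q g t &&
        forallb (fun a => if in_dec fact_eq_dec (ifact g a) D then true else false) (qbody Q)
      then 1 else 0) (assignments Q D t)).

Definition satisfies (D : instance) (d : dependency) : Prop :=
  match d with
  | TGD phi psi => forall h : nat -> nat,
      (forall a, In a phi -> In (dfact h a) D) ->
      exists h', (forall x, In x (dvars phi) -> h' x = h x) /\
                 (forall a, In a psi -> In (dfact h' a) D)
  | EGD phi u1 u2 => forall h : nat -> nat,
      (forall a, In a phi -> In (dfact h a) D) -> h u1 = h u2
  end.
Definition satisfies_all (D : instance) (Sigma : list dependency) : Prop :=
  forall d, In d Sigma -> satisfies D d.

(* bag-valued instances: relations listed as required set valued (SR p = true)
   have all multiplicities <= 1 *)
Definition bag_ok (SR : nat -> bool) (D : instance) : Prop :=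
  forall f : fact, SR (fst f) = true -> count_occ fact_eq_dec D f <= 1.

(* canonical database: variables replaced by distinct constants that are also
   distinct from the constants of Q *)
Definition freeze (Q : query) (x : nat) : nat := S (list_max (qconsts Q) + x).
Definition canon (Q : query) : instance := map (ifact (freeze Q)) (qbody Q).

Definition sterm (s : nat -> term) (t : term) : term :=
  match t with TVar x => s x | TCst c => TCst c end.
Definition satom (s : nat -> term) (a : atom) : atom := mkAtom (apred a) (map (sterm s) (aargs a)).
Definition squery (s : nat -> term) (Q : query) : query :=
  mkQuery (map (sterm s) (qhead Q)) (map (satom s) (qbody Q)).
Definition dinst (h : nat -> term) (a : datom) : atom := mkAtom (dpred a) (map h (dargs a)).

Definition dhom (h : nat -> term) (phi : list datom) (B : list atom) : Prop :=
  forall a, In a phi -> In (dinst h a) B.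

Definition repl (x : nat) (u : term) : nat -> term :=
  fun y => if Nat.eqb y x then u else TVar y.

Definition chase_step (d : dependency) (Q Q' : query) : Prop :=
  match d with
  | TGD phi psi =>
      exists h : nat -> term, dhom h phi (qbody Q) /\
        (~ exists h', (forall x, In x (dvars phi) -> h' x = h x) /\
                      dhom h' (phi ++ psi) (qbody Q)) /\
        exists g : nat -> term,
          (forall x, In x (dvars phi) -> g x = h x) /\
          (forall x, In x (dvars psi) -> ~ In x (dvars phi) ->
                     exists y, g x = TVar y /\ ~ In y (qvars Q)) /\
          (forall x y, In x (dvars psi) -> ~ In x (dvars phi) ->
                       In y (dvars psi) -> ~ In y (dvars phi) -> g x = g y -> x = y) /\
          Q' = mkQuery (qhead Q) (qbody Q ++ map (dinst g) psi)
  | EGD phi u1 u2 =>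
      exists h : nat -> term, dhom h phi (qbody Q) /\ h u1 <> h u2 /\
        ((exists x, h u1 = TVar x /\ Q' = squery (repl x (h u2)) Q) \/
         (exists x, h u2 = TVar x /\ Q' = squery (repl x (h u1)) Q))
  end.

Definition sigma_step (Sigma : list dependency) (Q Q' : query) : Prop :=
  exists d, In d Sigma /\ chase_step d Q Q'.

Definition dup_removal (SR : nat -> bool) (Q Q' : query) : Prop :=
  exists l1 a l2, qbody Q = l1 ++ a :: l2 /\ In a (l1 ++ l2) /\
    SR (apred a) = true /\ Q' = mkQuery (qhead Q) (l1 ++ l2).

Definition set_chase_result (Sigma : list dependency) (Q QS : query) : Prop :=
  clos_refl_trans query (sigma_step Sigma) Q QS /\ satisfies_all (canon QS) Sigma.

Definition bs_sound_step (Sigma : list dependency) (Q Q' : query) : Prop :=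
  sigma_step Sigma Q Q' /\
  forall D : instance, satisfies_all D Sigma ->
    forall t, mult_bagset Q D t = mult_bagset Q' D t.

Definition b_sound_step (SR : nat -> bool) (Sigma : list dependency) (Q Q' : query) : Prop :=
  (sigma_step Sigma Q Q' \/ dup_removal SR Q Q') /\
  forall D : instance, bag_ok SR D -> satisfies_all D Sigma ->
    forall t, mult_bag Q D t = mult_bag Q' D t.

Definition bs_chase_result (Sigma : list dependency) (Q QBS : query) : Prop :=
  clos_refl_trans query (bs_sound_step Sigma) Q QBS /\
  ~ exists Q'', bs_sound_step Sigma QBS Q''.

Definition b_chase_result (SR : nat -> bool) (Sigma : list dependency) (Q QB : query) : Prop :=
  clos_refl_trans query (b_sound_step SR Sigma) Q QB /\
  ~ exists Q'', b_sound_step SR Sigma QB Q''.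

From Stdlib Require Import List Bool PeanoNat Relations Lia Classical.
Import ListNotations.

(* All three containments come from homomorphisms (containment mappings) in the
   opposite direction.  Chase steps and duplicate removals only add atoms or
   substitute terms, so [Q] maps into [QB].  Since [canon QS] is a model of
   [Sigma], every query reachable from [Q] by chase steps maps into [QS], in
   particular [QBS].  Finally [QB] maps into [QBS] by induction along the bag
   chase: a bag-sound step either is already satisfied in [QBS], which extends
   the homomorphism, or transfers to a step on [QBS] that is sound under bag-set
   semantics (egd steps always are; a tgd step is sound iff satisfying
   assignments extend uniquely, which is inherited along the homomorphism),
   contradicting the maximality of [QBS]. *)

Definition occurs (Q : query) (t : term) : Prop :=
  In t (qhead Q) \/ exists a, In a (qbody Q) /\ In t (aargs a).

Lemma In_flat_map_tvars v l : In v (flat_map tvars l) <-> In (TVar v) l.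
Proof.
  rewrite in_flat_map; split.
  - intros [[x|c] [Ht Hv]]; simpl in Hv; [destruct Hv as [<-|[]]; exact Ht|contradiction].
  - intros H. exists (TVar v). simpl; auto.
Qed.

Lemma In_bvars v B : In v (bvars B) <-> exists a, In a B /\ In (TVar v) (aargs a).
Proof.
  unfold bvars, avars. rewrite in_flat_map.
  split; intros [a [Ha Hv]]; exists a; rewrite In_flat_map_tvars in *; auto.
Qed.

Lemma In_qvars Q v : In v (qvars Q) <-> occurs Q (TVar v).
Proof. unfold qvars, occurs. rewrite nodup_In, in_app_iff, In_flat_map_tvars, In_bvars. tauto. Qed.

Lemma occurs_In_qvars Q t v : occurs Q t -> In v (tvars t) -> In v (qvars Q).
Proof. destruct t; simpl; [intros H [<-|[]]; apply In_qvars; exact H|tauto]. Qed.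

Lemma le_list_max x l : In x l -> x <= list_max l.
Proof. intros H. exact (proj1 (Forall_forall _ l) (proj1 (list_max_le l _) (le_n _)) x H). Qed.

Lemma In_dvars v b psi : In b psi -> In v (dargs b) -> In v (dvars psi).
Proof. intros; unfold dvars; apply in_flat_map; eauto. Qed.

Lemma dhom_occurs h phi Q v : dhom h phi (qbody Q) -> In v (dvars phi) -> occurs Q (h v).
Proof.
  intros Hd Hv. unfold dvars in Hv. apply in_flat_map in Hv. destruct Hv as [a [Ha Hv]].
  right. exists (dinst h a). split; [auto|]. simpl. apply in_map; auto.
Qed.

Definition agree_on (l : list nat) (g g' : nat -> nat) : Prop := forall x, In x l -> g x = g' x.

Lemma map_eq_agree_on vs g g' : map g vs = map g' vs -> agree_on vs g g'.
Proof.
  induction vs as [|v vs IH]; simpl; intros H x Hx; [contradiction|]. injection H as Hv Hvs.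
  destruct Hx as [<-|Hx]; auto. apply IH; auto.
Qed.

Lemma eval_ext g g' t : (forall x, In x (tvars t) -> g x = g' x) -> eval g t = eval g' t.
Proof. destruct t; simpl; auto. Qed.

Lemma sterm_ext s s' t : (forall x, In x (tvars t) -> s x = s' x) -> sterm s t = sterm s' t.
Proof. destruct t; simpl; auto. Qed.

Lemma eval_occurs Q g g' t : agree_on (qvars Q) g g' -> occurs Q t -> eval g t = eval g' t.
Proof. intros H Ho. apply eval_ext. intros x Hx. apply H. eapply occurs_In_qvars; eauto. Qed.

Lemma sterm_occurs Q s s' t :
  (forall x, In x (qvars Q) -> s x = s' x) -> occurs Q t -> sterm s t = sterm s' t.
Proof. intros H Ho. apply sterm_ext. intros x Hx. apply H. eapply occurs_In_qvars; eauto. Qed.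

Lemma eval_sterm g s t : eval g (sterm s t) = eval (fun v => eval g (s v)) t.
Proof. destruct t; reflexivity. Qed.

Lemma map_eval_sterm g s l :
  map (eval g) (map (sterm s) l) = map (eval (fun v => eval g (s v))) l.
Proof. rewrite map_map. apply map_ext, eval_sterm. Qed.

Lemma ifact_satom g s a : ifact g (satom s a) = ifact (fun v => eval g (s v)) a.
Proof. unfold ifact, satom; simpl. f_equal. apply map_eval_sterm. Qed.

Lemma ifact_dinst g h a : ifact g (dinst h a) = dfact (fun v => eval g (h v)) a.
Proof. unfold ifact, dinst, dfact; simpl. rewrite map_map. reflexivity. Qed.

Lemma sterm_sterm s1 s2 t : sterm s2 (sterm s1 t) = sterm (fun v => sterm s2 (s1 v)) t.
Proof. destruct t; reflexivity. Qed.

Lemma satom_satom s1 s2 a : satom s2 (satom s1 a) = satom (fun v => sterm s2 (s1 v)) a.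
Proof. unfold satom; simpl. f_equal. rewrite map_map. apply map_ext, sterm_sterm. Qed.

Lemma satom_dinst s h a : satom s (dinst h a) = dinst (fun v => sterm s (h v)) a.
Proof. unfold satom, dinst; simpl. f_equal. rewrite map_map. reflexivity. Qed.

Lemma map_sterm_TVar l : map (sterm TVar) l = l.
Proof. rewrite <- (map_id l) at 2. apply map_ext. intros []; reflexivity. Qed.

Lemma satom_TVar a : satom TVar a = a.
Proof. destruct a as [p l]; unfold satom; simpl. rewrite map_sterm_TVar. reflexivity. Qed.

(** * Homomorphisms between queries *)

Definition hom_by (th : nat -> term) (Q1 Q2 : query) : Prop :=
  map (sterm th) (qhead Q1) = qhead Q2 /\
  forall a, In a (qbody Q1) -> In (satom th a) (qbody Q2).

Definition hom (Q1 Q2 : query) : Prop := exists th, hom_by th Q1 Q2.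

Lemma hom_by_occurs th Q1 Q2 t : hom_by th Q1 Q2 -> occurs Q1 t -> occurs Q2 (sterm th t).
Proof.
  intros [Hh Hb] [H|[a [Ha Ht]]].
  - left. rewrite <- Hh. apply in_map; auto.
  - right. exists (satom th a). split; auto. simpl. apply in_map; auto.
Qed.

Lemma hom_by_ext Q1 Q2 th th' :
  (forall x, In x (qvars Q1) -> th x = th' x) -> hom_by th Q1 Q2 -> hom_by th' Q1 Q2.
Proof.
  intros E [H1 H2]. split.
  - rewrite <- H1. apply map_ext_in. intros t Ht. symmetry. apply (sterm_occurs Q1); auto. left; auto.
  - intros a Ha. replace (satom th' a) with (satom th a); auto. unfold satom; f_equal.
    apply map_ext_in. intros t Ht. apply (sterm_occurs Q1); auto. right; eauto.
Qed.

Lemma dhom_hom_by h phi Q1 Q2 th : dhom h phi (qbody Q1) -> hom_by th Q1 Q2 ->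
  dhom (fun v => sterm th (h v)) phi (qbody Q2).
Proof. intros Hh [_ H2] a Ha. rewrite <- satom_dinst. apply H2, Hh; auto. Qed.

Lemma hom_of_body_incl Q1 Q2 :
  qhead Q1 = qhead Q2 -> incl (qbody Q1) (qbody Q2) -> hom Q1 Q2.
Proof.
  intros Hh Hb. exists TVar. split.
  - rewrite map_sterm_TVar. exact Hh.
  - intros a Ha. rewrite satom_TVar. auto.
Qed.

Lemma hom_refl Q : hom Q Q.
Proof. apply hom_of_body_incl; [reflexivity|apply incl_refl]. Qed.

Lemma hom_trans Q1 Q2 Q3 : hom Q1 Q2 -> hom Q2 Q3 -> hom Q1 Q3.
Proof.
  intros [t1 [H1 B1]] [t2 [H2 B2]]. exists (fun v => sterm t2 (t1 v)). split.
  - rewrite <- H2, <- H1, map_map. apply map_ext. intros; symmetry; apply sterm_sterm.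
  - intros a Ha. rewrite <- satom_satom. auto.
Qed.

Lemma hom_squery s Q : hom Q (squery s Q).
Proof. exists s. split; [reflexivity|]. intros a Ha. apply in_map; auto. Qed.

Lemma hom_by_squery s th Q1 Q2 :
  (forall v, sterm th (s v) = th v) -> hom_by th Q1 Q2 -> hom (squery s Q1) Q2.
Proof.
  intros E [H1 H2]. exists th. split.
  - simpl. rewrite <- H1, map_map. apply map_ext. intros t. rewrite sterm_sterm. apply sterm_ext; auto.
  - intros a Ha. simpl in Ha. apply in_map_iff in Ha. destruct Ha as [b [<- Hb]].
    rewrite satom_satom. replace (satom (fun v => sterm th (s v)) b) with (satom th b); auto.
    unfold satom; f_equal. apply map_ext. intros t; apply sterm_ext; auto.
Qed.

Lemma hom_set_contained Q1 Q2 : hom Q1 Q2 -> set_contained Q2 Q1.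
Proof.
  intros [th [Hh Hb]] D t [g [Hg Ha]].
  exists (fun v => eval g (th v)). split.
  - rewrite <- Hg, <- Hh, map_eval_sterm. reflexivity.
  - intros a Hin. rewrite <- ifact_satom. auto.
Qed.

Lemma chase_step_hom d Q Q' : chase_step d Q Q' -> hom Q Q'.
Proof.
  destruct d; simpl.
  - intros [h [_ [_ [g [_ [_ [_ ->]]]]]]]. apply hom_of_body_incl; [reflexivity|].
    intros a Ha. apply in_or_app; auto.
  - intros [h [_ [_ [[x [_ ->]]|[x [_ ->]]]]]]; apply hom_squery.
Qed.

Lemma sigma_step_hom Sigma Q Q' : sigma_step Sigma Q Q' -> hom Q Q'.
Proof. intros [d [_ H]]. eapply chase_step_hom; eauto. Qed.

Lemma dup_removal_hom SR Q Q' : dup_removal SR Q Q' -> hom Q Q' /\ hom Q' Q.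
Proof.
  intros [l1 [a [l2 [Hb [Hin [_ ->]]]]]].
  split; apply hom_of_body_incl; try reflexivity; intros b; simpl; rewrite Hb, !in_app_iff.
  - intros [H|[<-|H]]; auto. apply in_app_iff in Hin. exact Hin.
  - simpl; tauto.
Qed.

Lemma clos_rt_hom (R : relation query) Q Q' :
  (forall A B, R A B -> hom A B) -> clos_refl_trans query R Q Q' -> hom Q Q'.
Proof.
  intros HR H. induction H; eauto using hom_refl, hom_trans.
Qed.

Lemma clos_rt_mono (R1 R2 : relation query) x y :
  inclusion query R1 R2 -> clos_refl_trans query R1 x y -> clos_refl_trans query R2 x y.
Proof. intros H Hr. induction Hr; eauto using clos_refl_trans. Qed.

(** * Counting satisfying assignments *)

Definition sat (Q : query) (D : instance) (t : list nat) (g : nat -> nat) : Prop :=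
  map (eval g) (qhead Q) = t /\ forall a, In a (qbody Q) -> In (ifact g a) D.

Lemma sat_ext Q D t g g' : agree_on (qvars Q) g g' -> sat Q D t g -> sat Q D t g'.
Proof.
  intros H [Hh Hb]. split.
  - rewrite <- Hh. apply map_ext_in. intros u Hu. symmetry. apply (eval_occurs Q); auto. left; auto.
  - intros a Ha. replace (ifact g' a) with (ifact g a); auto. unfold ifact. f_equal.
    apply map_ext_in. intros u Hu. apply (eval_occurs Q); auto. right; eauto.
Qed.

Lemma sat_incl Q D D' t g : incl D D' -> sat Q D t g -> sat Q D' t g.
Proof. intros H [H1 H2]; split; auto. Qed.

Lemma sat_squery s Q D t g : sat (squery s Q) D t g <-> sat Q D t (fun v => eval g (s v)).
Proof.
  unfold sat; simpl. rewrite map_eval_sterm. split; intros [H1 H2]; split; auto.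
  - intros a Ha. rewrite <- ifact_satom. apply H2, in_map; auto.
  - intros a Ha. apply in_map_iff in Ha. destruct Ha as [b [<- Hb]]. rewrite ifact_satom. auto.
Qed.

Lemma sat_hom_by th Q P D t d : hom_by th Q P -> sat P D t d -> sat Q D t (fun v => eval d (th v)).
Proof.
  intros [Hh Hb] [Hs1 Hs2]. split.
  - rewrite <- Hs1, <- Hh, map_eval_sterm. reflexivity.
  - intros a Ha. rewrite <- ifact_satom. auto.
Qed.

Lemma sat_In_adom Q D t g x : sat Q D t g -> In x (qvars Q) -> In (g x) (adom D ++ t).
Proof.
  intros [Hh Hb] Hx. apply In_qvars in Hx. apply in_or_app.
  change (g x) with (eval g (TVar x)). destruct Hx as [H|[a [Ha Ht]]].
  - right. rewrite <- Hh. apply in_map; auto.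
  - left. unfold adom. apply in_flat_map. exists (ifact g a). split; auto. apply in_map; auto.
Qed.

Lemma In_tuples C n tau : In tau (tuples C n) <-> length tau = n /\ incl tau C.
Proof.
  revert tau; induction n as [|n IH]; intros tau; simpl.
  - split.
    + intros [<-|[]]. split; [reflexivity|intros x []].
    + intros [H _]. destruct tau; [auto|discriminate].
  - rewrite in_flat_map. split.
    + intros [c [Hc Hm]]. apply in_map_iff in Hm. destruct Hm as [tl [<- Htl]].
      apply IH in Htl. destruct Htl as [Hl Hi]. split; simpl; auto. intros y [<-|Hy]; auto.
    + intros [Hl Hi]. destruct tau as [|c tl]; [discriminate|]. exists c. split; [apply Hi; left; auto|].
      apply in_map, IH. split; [simpl in Hl; lia|]. intros y Hy; apply Hi; right; auto.
Qed.

Lemma NoDup_flat_map_cons (C : list nat) (T : list (list nat)) : NoDup C -> NoDup T ->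
  NoDup (flat_map (fun c => map (cons c) T) C).
Proof.
  intros HC HT. induction HC as [|c C Hc HC IH]; simpl; [constructor|]. apply NoDup_app; auto.
  - apply FinFun.Injective_map_NoDup; auto. intros a b Hab; injection Hab; auto.
  - intros y Hy1 Hy2. apply in_map_iff in Hy1. destruct Hy1 as [u [<- _]].
    apply in_flat_map in Hy2. destruct Hy2 as [c' [Hc' Hm]]. apply in_map_iff in Hm.
    destruct Hm as [w [Hw _]]. injection Hw as -> _. contradiction.
Qed.

Lemma NoDup_tuples C n : NoDup C -> NoDup (tuples C n).
Proof.
  intros HC. induction n as [|n IH]; simpl; [repeat constructor; auto|].
  apply NoDup_flat_map_cons; auto.
Qed.

Lemma assoc_map vs g x : NoDup vs -> In x vs -> assoc vs (map g vs) x = g x.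
Proof.
  induction 1 as [|v vs Hv Hvs IH]; simpl; [intros []|]. intros [<-|Hx].
  - rewrite Nat.eqb_refl; auto.
  - destruct (Nat.eqb_spec v x); subst; auto.
Qed.

Lemma map_assoc vs tau : NoDup vs -> length tau = length vs -> map (assoc vs tau) vs = tau.
Proof.
  intros H; revert tau; induction H as [|v vs Hv Hvs IH]; intros [|c tau] Hl;
    simpl in *; try discriminate; auto.
  rewrite Nat.eqb_refl. f_equal. transitivity (map (assoc vs tau) vs); [|apply IH; lia].
  apply map_ext_in.
  intros y Hy. destruct (Nat.eqb_spec v y); subst; [contradiction|auto].
Qed.

(* Satisfying assignments, encoded as tuples of values of the variables of [Q]
   in the order of [qvars Q]. *)
Definition sat_tuples (Q : query) (D : instance) (t : list nat) : list (list nat) :=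
  filter (fun tau => head_ok Q (assoc (qvars Q) tau) t &&
     forallb (fun a => if in_dec fact_eq_dec (ifact (assoc (qvars Q) tau) a) D then true else false)
       (qbody Q))
    (tuples (nodup Nat.eq_dec (adom D ++ t)) (length (qvars Q))).

Lemma list_sum_indicator {A} (b : A -> bool) l :
  list_sum (map (fun x => if b x then 1 else 0) l) = length (filter b l).
Proof. induction l as [|x l IH]; simpl; auto. destruct (b x); simpl; auto. Qed.

Lemma mult_bagset_sat_tuples Q D t : mult_bagset Q D t = length (sat_tuples Q D t).
Proof.
  unfold mult_bagset, assignments, sat_tuples. rewrite map_map.
  apply (list_sum_indicator (fun tau => _ && _)).
Qed.

Lemma NoDup_sat_tuples Q D t : NoDup (sat_tuples Q D t).
Proof. apply NoDup_filter, NoDup_tuples, NoDup_nodup. Qed.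

Lemma In_sat_tuples Q D t tau :
  In tau (sat_tuples Q D t) <-> length tau = length (qvars Q) /\ sat Q D t (assoc (qvars Q) tau).
Proof.
  unfold sat_tuples, sat, head_ok. rewrite filter_In, In_tuples, andb_true_iff, forallb_forall.
  set (g := assoc (qvars Q) tau).
  assert (Hb : (forall a, In a (qbody Q) ->
                 (if in_dec fact_eq_dec (ifact g a) D then true else false) = true) <->
               (forall a, In a (qbody Q) -> In (ifact g a) D)).
  { split; intros H a Ha; specialize (H a Ha); destruct (in_dec fact_eq_dec (ifact g a) D);
      auto; discriminate. }
  rewrite Hb. destruct (list_eq_dec Nat.eq_dec (map (eval g) (qhead Q)) t) as [Hh|Hh];
    [|split; [intros [_ [H _]]; discriminate|intros [_ [H _]]; contradiction]].
  split; [tauto|]. intros [Hl Hs]. split; [split|tauto]; auto.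
  intros c Hc. rewrite <- (map_assoc (qvars Q) tau) in Hc by (auto; apply NoDup_nodup).
  apply in_map_iff in Hc. destruct Hc as [x [<- Hx]]. apply nodup_In.
  apply (sat_In_adom Q); [exact Hs|exact Hx].
Qed.

Lemma sat_tuples_of_sat Q D t g : sat Q D t g -> In (map g (qvars Q)) (sat_tuples Q D t).
Proof.
  intros H. apply In_sat_tuples. split; [apply length_map|]. eapply sat_ext; [|exact H].
  intros x Hx. symmetry. apply assoc_map; [apply NoDup_nodup|auto].
Qed.

Lemma NoDup_length_le_rel {A B} (decB : forall x y : B, {x = y} + {x <> y})
    (R : A -> B -> Prop) l1 l2 :
  NoDup l1 -> (forall a, In a l1 -> exists b, In b l2 /\ R a b) ->
  (forall a a' b, In a l1 -> In a' l1 -> R a b -> R a' b -> a = a') -> length l1 <= length l2.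
Proof.
  intros H; revert l2; induction H as [|a l1 Hn Hd IH]; intros l2 Hex Hinj; simpl; [lia|].
  destruct (Hex a (or_introl eq_refl)) as [b [Hb Rb]].
  assert (length l1 <= length (remove decB b l2)).
  { apply IH.
    - intros a' Ha'. destruct (Hex a' (or_intror Ha')) as [b' [Hb' Rb']]. exists b'.
      split; auto. apply in_in_remove; auto. intros ->. apply Hn.
      replace a' with a in Ha'; auto. apply (Hinj a a' b); simpl; auto.
    - intros; apply (Hinj a0 a' b0); simpl; auto. }
  pose proof (remove_length_lt decB l2 b Hb). lia.
Qed.

Section Counting.

Variables (Q Q' : query) (D D' : instance) (t t' : list nat).
Variable R : (nat -> nat) -> (nat -> nat) -> Prop.

Hypothesis R_inj : forall g1 g2 g1' g2',
  sat Q D t g1 -> sat Q D t g2 -> sat Q' D' t' g1' -> sat Q' D' t' g2' ->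
  agree_on (qvars Q') g1' g2' -> R g1 g1' -> R g2 g2' -> agree_on (qvars Q) g1 g2.

Lemma sat_tuples_length_le_rel (l : list (list nat)) :
  (forall g, sat Q D t g -> exists g', sat Q' D' t' g' /\ R g g' /\ In (map g' (qvars Q')) l) ->
  length (sat_tuples Q D t) <= length l.
Proof.
  intros Hex.
  apply (NoDup_length_le_rel (list_eq_dec Nat.eq_dec) (fun tau tau' =>
    exists g', sat Q' D' t' g' /\ map g' (qvars Q') = tau' /\ R (assoc (qvars Q) tau) g')).
  - apply NoDup_sat_tuples.
  - intros tau Htau. apply In_sat_tuples in Htau. destruct Htau as [_ Hs].
    destruct (Hex _ Hs) as [g' [Hs' [HR Hl]]]. exists (map g' (qvars Q')). eauto.
  - intros a a' b Ha Ha' [g1 [S1 [E1 R1]]] [g2 [S2 [E2 R2]]].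
    apply In_sat_tuples in Ha, Ha'.
    rewrite <- (map_assoc (qvars Q) a), <- (map_assoc (qvars Q) a') by (tauto || apply NoDup_nodup).
    apply map_ext_in. apply (R_inj _ _ g1 g2); try tauto.
    apply map_eq_agree_on. congruence.
Qed.

Lemma mult_bagset_le_rel :
  (forall g, sat Q D t g -> exists g', sat Q' D' t' g' /\ R g g') ->
  mult_bagset Q D t <= mult_bagset Q' D' t'.
Proof.
  intros Hex. rewrite !mult_bagset_sat_tuples. apply sat_tuples_length_le_rel.
  intros g Hg. destruct (Hex g Hg) as [g' [Hs HR]]. exists g'. auto using sat_tuples_of_sat.
Qed.

Lemma mult_bagset_lt_rel gb : sat Q' D' t' gb ->
  (forall g, sat Q D t g -> exists g', sat Q' D' t' g' /\ R g g' /\ ~ agree_on (qvars Q') g' gb) ->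
  mult_bagset Q D t < mult_bagset Q' D' t'.
Proof.
  intros Hb Hex. rewrite !mult_bagset_sat_tuples.
  set (tb := map gb (qvars Q')).
  assert (Htb : In tb (sat_tuples Q' D' t')) by (apply sat_tuples_of_sat; auto).
  enough (length (sat_tuples Q D t) <= length (remove (list_eq_dec Nat.eq_dec) tb (sat_tuples Q' D' t')))
    by (pose proof (remove_length_lt (list_eq_dec Nat.eq_dec) _ _ Htb); lia).
  apply sat_tuples_length_le_rel. intros g Hg. destruct (Hex g Hg) as [g' [Hs [HR Hn]]].
  exists g'. split; [auto|split; [auto|]]. apply in_in_remove; [|apply sat_tuples_of_sat; auto].
  intros E. apply Hn, map_eq_agree_on, E.
Qed.

End Counting.

Lemma count_occ_NoDup D f :
  NoDup D -> count_occ fact_eq_dec D f = if in_dec fact_eq_dec f D then 1 else 0.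
Proof.
  intros ND. destruct (in_dec fact_eq_dec f D) as [Hi|Hi].
  - exact (proj1 (NoDup_count_occ' fact_eq_dec D) ND _ Hi).
  - exact (proj1 (count_occ_not_In fact_eq_dec D _) Hi).
Qed.

Lemma mult_bag_NoDup Q D t : NoDup D -> mult_bag Q D t = mult_bagset Q D t.
Proof.
  intros ND. unfold mult_bag, mult_bagset. f_equal. apply map_ext. intros g.
  destruct (head_ok Q g t); simpl; [|reflexivity].
  induction (qbody Q) as [|a l IH]; simpl; [reflexivity|].
  rewrite IH, count_occ_NoDup by exact ND.
  destruct (in_dec fact_eq_dec (ifact g a) D), (forallb _ l); reflexivity.
Qed.

Lemma bag_ok_NoDup SR D : NoDup D -> bag_ok SR D.
Proof. intros ND f _. rewrite count_occ_NoDup by exact ND. destruct (in_dec _ _ _); auto. Qed.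

Lemma satisfies_same_facts D D' dp :
  (forall f, In f D <-> In f D') -> satisfies D dp -> satisfies D' dp.
Proof.
  intros H. destruct dp; simpl; intros S hh Hp.
  - destruct (S hh) as [h' [A B]]; [intros a Ha; apply H; auto|].
    exists h'. split; auto. intros a Ha; apply H; auto.
  - apply S. intros a Ha; apply H; auto.
Qed.

(** * Tgd applications *)

Definition tgd_application (Q : query) (phi psi : list datom) (h g : nat -> term) : Prop :=
  dhom h phi (qbody Q) /\
  (forall x, In x (dvars phi) -> g x = h x) /\
  (forall x, In x (dvars psi) -> ~ In x (dvars phi) ->
     exists y, g x = TVar y /\ ~ In y (qvars Q)) /\
  (forall x y, In x (dvars psi) -> ~ In x (dvars phi) ->
     In y (dvars psi) -> ~ In y (dvars phi) -> g x = g y -> x = y).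

Definition tgd_apply (Q : query) (psi : list datom) (g : nat -> term) : query :=
  mkQuery (qhead Q) (qbody Q ++ map (dinst g) psi).

Lemma chase_step_tgd phi psi Q Q' : chase_step (TGD phi psi) Q Q' ->
  exists h g, tgd_application Q phi psi h g /\ Q' = tgd_apply Q psi g /\
    ~ (exists h', (forall x, In x (dvars phi) -> h' x = h x) /\ dhom h' (phi ++ psi) (qbody Q)).
Proof. intros [h [Hh [Hn [g [H1 [H2 [H3 ->]]]]]]]. exists h, g. repeat split; auto. Qed.

Lemma tgd_application_fresh_vars Q phi psi h : dhom h phi (qbody Q) ->
  exists g, tgd_application Q phi psi h g.
Proof.
  intros Hh. set (N := S (list_max (qvars Q))).
  exists (fun x => if in_dec Nat.eq_dec x (dvars phi) then h x else TVar (N + x)).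
  split; [exact Hh|split; [|split]].
  - intros x Hx. destruct (in_dec Nat.eq_dec x (dvars phi)); [reflexivity|contradiction].
  - intros x Hx Hn. exists (N + x). destruct (in_dec Nat.eq_dec x (dvars phi)); [contradiction|].
    split; [reflexivity|]. intros Hy. apply le_list_max in Hy. unfold N in Hy; lia.
  - intros x y _ Hx _ Hy. destruct (in_dec Nat.eq_dec x (dvars phi)); [contradiction|].
    destruct (in_dec Nat.eq_dec y (dvars phi)); [contradiction|]. intros E; injection E; lia.
Qed.

Definition term_eq_dec (a b : term) : {a = b} + {a <> b}.
Proof. decide equality; apply Nat.eq_dec. Defined.

Definition fresh_preimage (phi psi : list datom) (g : nat -> term) (y : nat) : option nat :=
  find (fun x => (if in_dec Nat.eq_dec x (dvars phi) then false else true) &&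
                 (if term_eq_dec (g x) (TVar y) then true else false)) (dvars psi).

(* Glues a map on the variables of [Q] with a map on the variables of [psi]
   into a map on the variables of [tgd_apply Q psi g]. *)
Definition tgd_extend {A : Type} phi psi g (f f' : nat -> A) : nat -> A :=
  fun y => match fresh_preimage phi psi g y with Some x => f' x | None => f y end.

Definition unique_ext (Q Q' : query) (D : instance) (t : list nat) : Prop :=
  forall d1 d2, sat Q' D t d1 -> sat Q' D t d2 ->
    agree_on (qvars Q) d1 d2 -> agree_on (qvars Q') d1 d2.

Lemma occurs_tgd_apply Q psi g t :
  occurs (tgd_apply Q psi g) t <-> occurs Q t \/ exists v, In v (dvars psi) /\ g v = t.
Proof.
  unfold occurs, tgd_apply; simpl. split.
  - intros [H|[a [Ha Ht]]]; auto. apply in_app_or in Ha. destruct Ha as [Ha|Ha]; eauto.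
    apply in_map_iff in Ha. destruct Ha as [b [<- Hb]]. simpl in Ht. apply in_map_iff in Ht.
    destruct Ht as [v [<- Hv]]. right. exists v. split; [eapply In_dvars; eauto|reflexivity].
  - intros [[H|[a [Ha Ht]]]|[v [Hv <-]]]; auto.
    + right. exists a. split; auto. apply in_or_app; auto.
    + unfold dvars in Hv. apply in_flat_map in Hv. destruct Hv as [b [Hb Hv]].
      right. exists (dinst g b). split; [apply in_or_app; right; apply in_map; auto|].
      simpl. apply in_map; auto.
Qed.

Lemma In_qvars_tgd_apply_old Q psi g v : In v (qvars Q) -> In v (qvars (tgd_apply Q psi g)).
Proof. rewrite !In_qvars, occurs_tgd_apply. auto. Qed.

Lemma In_qvars_tgd_apply_fresh Q psi g x y :
  In x (dvars psi) -> g x = TVar y -> In y (qvars (tgd_apply Q psi g)).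
Proof. intros H1 H2. apply In_qvars, occurs_tgd_apply. right. eauto. Qed.

Lemma sat_tgd_apply_restrict Q psi g D t d : sat (tgd_apply Q psi g) D t d -> sat Q D t d.
Proof. intros [H1 H2]. split; auto. intros a Ha. apply H2, in_or_app; auto. Qed.

Section TgdApplication.

Variables (Q : query) (phi psi : list datom) (h g : nat -> term).
Hypothesis Happ : tgd_application Q phi psi h g.

Lemma fresh_preimage_fresh x y : In x (dvars psi) -> ~ In x (dvars phi) -> g x = TVar y ->
  fresh_preimage phi psi g y = Some x.
Proof.
  destruct Happ as [_ [_ [_ Hinj]]]. intros H1 H2 H3.
  destruct (fresh_preimage phi psi g y) as [x'|] eqn:E.
  - apply find_some in E. destruct E as [E1 E2]. apply andb_true_iff in E2.
    destruct (in_dec Nat.eq_dec x' (dvars phi)); [destruct E2; discriminate|].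
    destruct (term_eq_dec (g x') (TVar y)); [|destruct E2; discriminate].
    f_equal. apply Hinj; congruence.
  - pose proof (find_none _ _ E x H1) as F. simpl in F.
    destruct (in_dec Nat.eq_dec x (dvars phi)); [contradiction|].
    destruct (term_eq_dec (g x) (TVar y)); [discriminate|contradiction].
Qed.

Lemma fresh_preimage_old y : In y (qvars Q) -> fresh_preimage phi psi g y = None.
Proof.
  destruct Happ as [_ [_ [Hfresh _]]]. intros Hy.
  destruct (fresh_preimage phi psi g y) as [x|] eqn:E; [|reflexivity].
  apply find_some in E. destruct E as [E1 E2]. apply andb_true_iff in E2.
  destruct (in_dec Nat.eq_dec x (dvars phi)) as [|Hx]; [destruct E2; discriminate|].
  destruct (term_eq_dec (g x) (TVar y)) as [Hg|]; [|destruct E2; discriminate].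
  destruct (Hfresh x E1 Hx) as [y' [Hy' Hn]]. rewrite Hg in Hy'. injection Hy' as ->. contradiction.
Qed.

Lemma tgd_extend_old {A : Type} (f f' : nat -> A) y :
  In y (qvars Q) -> tgd_extend phi psi g f f' y = f y.
Proof. intros Hy. unfold tgd_extend. rewrite fresh_preimage_old; auto. Qed.

Lemma In_qvars_tgd_apply v : In v (qvars (tgd_apply Q psi g)) ->
  In v (qvars Q) \/ exists x, In x (dvars psi) /\ ~ In x (dvars phi) /\ g x = TVar v.
Proof.
  destruct Happ as [Hh [Hg _]].
  rewrite !In_qvars, occurs_tgd_apply. intros [H|[x [Hx Hgx]]]; auto.
  destruct (in_dec Nat.eq_dec x (dvars phi)) as [Hp|Hp]; eauto.
  left. rewrite Hg in Hgx by auto. rewrite <- Hgx. apply dhom_occurs with phi; auto.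
Qed.

Lemma sterm_tgd_extend th h' x : In x (dvars psi) ->
  (forall x, In x (dvars phi) -> h' x = sterm th (h x)) ->
  sterm (tgd_extend phi psi g th h') (g x) = h' x.
Proof.
  destruct Happ as [Hh [Hg [Hfresh _]]]. intros Hx Hh'.
  destruct (in_dec Nat.eq_dec x (dvars phi)) as [Hp|Hp].
  - rewrite Hg, Hh' by auto. apply (sterm_occurs Q); [|apply dhom_occurs with phi; auto].
    intros; apply tgd_extend_old; auto.
  - destruct (Hfresh x Hx Hp) as [y [Hy _]]. rewrite Hy. simpl. unfold tgd_extend.
    rewrite (fresh_preimage_fresh x y); auto.
Qed.

Lemma eval_tgd_extend d d' x : In x (dvars psi) ->
  (forall x, In x (dvars phi) -> d' x = eval d (h x)) ->
  eval (tgd_extend phi psi g d d') (g x) = d' x.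
Proof.
  destruct Happ as [Hh [Hg [Hfresh _]]]. intros Hx Hd'.
  destruct (in_dec Nat.eq_dec x (dvars phi)) as [Hp|Hp].
  - rewrite Hg, Hd' by auto. apply (eval_occurs Q); [|apply dhom_occurs with phi; auto].
    intros y Hy. apply tgd_extend_old; auto.
  - destruct (Hfresh x Hx Hp) as [y [Hy _]]. rewrite Hy. simpl. unfold tgd_extend.
    rewrite (fresh_preimage_fresh x y); auto.
Qed.

Lemma hom_tgd_apply th P h' : hom_by th Q P ->
  (forall x, In x (dvars phi) -> h' x = sterm th (h x)) ->
  (forall b, In b psi -> In (dinst h' b) (qbody P)) ->
  hom (tgd_apply Q psi g) P.
Proof.
  intros Hth Hh' Hpsi. exists (tgd_extend phi psi g th h').
  destruct (hom_by_ext Q P th (tgd_extend phi psi g th h')) as [K1 K2]; auto.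
  { intros y Hy. symmetry. apply tgd_extend_old; auto. }
  split; [exact K1|]. intros a Hin. apply in_app_or in Hin. destruct Hin as [Hin|Hin]; auto.
  apply in_map_iff in Hin. destruct Hin as [b [<- Hb]].
  replace (satom _ (dinst g b)) with (dinst h' b); auto.
  rewrite satom_dinst. unfold dinst. f_equal. apply map_ext_in. intros v Hv.
  symmetry. apply sterm_tgd_extend; auto. eapply In_dvars; eauto.
Qed.

Lemma sat_tgd_apply D t d d' : sat Q D t d ->
  (forall x, In x (dvars phi) -> d' x = eval d (h x)) ->
  (forall b, In b psi -> In (dfact d' b) D) ->
  sat (tgd_apply Q psi g) D t (tgd_extend phi psi g d d').
Proof.
  intros Hs Hd' Hpsi. apply (sat_ext _ _ _ d (tgd_extend phi psi g d d')) in Hs;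
    [|intros y Hy; symmetry; apply tgd_extend_old; auto].
  destruct Hs as [Hs1 Hs2]. split; [exact Hs1|]. intros a Hin. apply in_app_or in Hin.
  destruct Hin as [Hin|Hin]; auto. apply in_map_iff in Hin. destruct Hin as [b [<- Hb]].
  rewrite ifact_dinst. replace (dfact _ b) with (dfact d' b); auto.
  unfold dfact; f_equal. apply map_ext_in. intros v Hv.
  symmetry. apply eval_tgd_extend; auto. eapply In_dvars; eauto.
Qed.

Lemma sat_tgd_apply_extend D t d : satisfies D (TGD phi psi) -> sat Q D t d ->
  exists d', sat (tgd_apply Q psi g) D t d' /\ agree_on (qvars Q) d d'.
Proof.
  destruct Happ as [Hh _]. intros HD Hs.
  destruct (HD (fun v => eval d (h v))) as [d' [Hphi Hpsi]].
  { intros a Ha. rewrite <- ifact_dinst. apply Hs, Hh; auto. }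
  exists (tgd_extend phi psi g d d'). split; [apply sat_tgd_apply; auto|].
  intros y Hy. symmetry. apply tgd_extend_old; auto.
Qed.

(* The step preserves bag-set answers iff every satisfying assignment of [Q]
   has exactly one extension: the extension always exists, and a second one
   would be counted twice. *)
Lemma mult_bagset_tgd_apply_iff D t : satisfies D (TGD phi psi) ->
  mult_bagset Q D t = mult_bagset (tgd_apply Q psi g) D t <-> unique_ext Q (tgd_apply Q psi g) D t.
Proof.
  intros HD. set (Q' := tgd_apply Q psi g).
  assert (Hold : forall d1 d2, agree_on (qvars Q') d1 d2 -> agree_on (qvars Q) d1 d2)
    by (intros d1 d2 A y Hy; apply A, In_qvars_tgd_apply_old; auto).
  assert (Rinj : forall d1 d2 d1' d2', sat Q D t d1 -> sat Q D t d2 -> sat Q' D t d1' ->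
      sat Q' D t d2' -> agree_on (qvars Q') d1' d2' ->
      agree_on (qvars Q) d1 d1' -> agree_on (qvars Q) d2 d2' -> agree_on (qvars Q) d1 d2).
  { intros d1 d2 d1' d2' _ _ _ _ A' A1 A2 y Hy. rewrite A1, A2, (Hold _ _ A'); auto. }
  assert (Hle : mult_bagset Q D t <= mult_bagset Q' D t).
  { apply (mult_bagset_le_rel _ _ _ _ _ _ _ Rinj). intros d Hs. exact (sat_tgd_apply_extend D t d HD Hs). }
  split.
  - intros E d1 d2 S1 S2 A12. apply NNPP. intro NA.
    enough (mult_bagset Q D t < mult_bagset Q' D t) by lia.
    apply (mult_bagset_lt_rel _ _ _ _ _ _ _ Rinj d2); auto.
    intros d Hs. destruct (classic (agree_on (qvars Q) d d1)) as [Y|N].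
    + exists d1. split; [exact S1|split; auto].
    + destruct (sat_tgd_apply_extend D t d HD Hs) as [d' [S' A']].
      exists d'. split; [exact S'|split; auto]. intros A2. apply N. intros y Hy.
      rewrite A', A2, A12; auto. apply In_qvars_tgd_apply_old; auto.
  - intros U. apply Nat.le_antisymm; [exact Hle|].
    apply (mult_bagset_le_rel _ _ _ _ _ _ (agree_on (qvars Q))).
    + intros d1 d2 d1' d2' S1 S2 _ _ A' A1 A2. apply U; auto.
      intros y Hy. rewrite A1, A2, A'; auto.
    + intros d Hs. exists d. split; [eapply sat_tgd_apply_restrict; eauto|intros y _; auto].
Qed.

End TgdApplication.

Lemma unique_ext_hom_by Q P phi psi h g g2 th D t :
  tgd_application Q phi psi h g ->
  tgd_application P phi psi (fun v => sterm th (h v)) g2 ->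
  hom_by th Q P ->
  unique_ext Q (tgd_apply Q psi g) D t -> unique_ext P (tgd_apply P psi g2) D t.
Proof.
  intros Happ Happ2 Hth U d1 d2 S1 S2 A12.
  pose proof Happ as [_ [_ [Gfresh _]]]. pose proof Happ2 as [_ [G2phi _]].
  set (lift := fun d : nat -> nat =>
    tgd_extend phi psi g (fun v => eval d (th v)) (fun x => eval d (g2 x))).
  assert (Hphi : forall d x, In x (dvars phi) -> eval d (g2 x) = eval (fun v => eval d (th v)) (h x))
    by (intros d x Hx; rewrite G2phi, <- eval_sterm by exact Hx; reflexivity).
  assert (Hlift : forall d, sat (tgd_apply P psi g2) D t d -> sat (tgd_apply Q psi g) D t (lift d)).
  { intros d Hs. apply (sat_tgd_apply Q phi psi h g Happ); [|apply Hphi|].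
    - eapply sat_hom_by; [exact Hth|]. eapply sat_tgd_apply_restrict; eauto.
    - intros b Hb. replace (dfact _ b) with (ifact d (dinst g2 b)) by apply ifact_dinst.
      apply Hs, in_or_app. right. apply in_map; auto. }
  assert (Hnew : forall d x, In x (dvars psi) -> eval (lift d) (g x) = eval d (g2 x))
    by (intros d x Hx; apply (eval_tgd_extend Q phi psi h g Happ); auto).
  assert (U12 : agree_on (qvars (tgd_apply Q psi g)) (lift d1) (lift d2)).
  { apply U; auto. intros y Hy. unfold lift. rewrite !(tgd_extend_old Q phi psi h g Happ) by exact Hy.
    apply (eval_occurs P); [exact A12|]. apply (hom_by_occurs th Q P (TVar y) Hth), In_qvars, Hy. }
  intros v Hv. destruct (In_qvars_tgd_apply P phi psi _ g2 Happ2 v Hv) as [Hold|[x [Hx [Hnx Hgx]]]];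
    [auto|].
  destruct (Gfresh x Hx Hnx) as [z [Hz _]].
  pose proof (U12 z (In_qvars_tgd_apply_fresh Q psi g x z Hx Hz)) as E.
  change (eval (lift d1) (TVar z) = eval (lift d2) (TVar z)) in E.
  rewrite <- Hz, !Hnew, Hgx in E by exact Hx. exact E.
Qed.

Lemma unique_ext_of_mult_bag_eq SR Sigma Q phi psi h g :
  tgd_application Q phi psi h g -> In (TGD phi psi) Sigma ->
  (forall D, bag_ok SR D -> satisfies_all D Sigma ->
     forall t, mult_bag Q D t = mult_bag (tgd_apply Q psi g) D t) ->
  forall D t, satisfies_all D Sigma -> unique_ext Q (tgd_apply Q psi g) D t.
Proof.
  intros Happ Hin Hsound D t HD d1 d2 S1 S2.
  set (D0 := nodup fact_eq_dec D).
  assert (Hsame : forall f, In f D <-> In f D0) by (intros; unfold D0; rewrite nodup_In; tauto).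
  assert (HD0 : satisfies_all D0 Sigma) by (intros dp Hdp; apply (satisfies_same_facts D); auto).
  assert (ND : NoDup D0) by apply NoDup_nodup.
  apply (mult_bagset_tgd_apply_iff Q phi psi h g Happ D0 t); auto.
  - rewrite <- !mult_bag_NoDup by exact ND. apply Hsound; [apply bag_ok_NoDup|]; auto.
  - apply (sat_incl _ D); auto. intros f; apply Hsame.
  - apply (sat_incl _ D); auto. intros f; apply Hsame.
Qed.

(** * Egd steps *)

Lemma occurs_squery s P t' : occurs (squery s P) t' <-> exists t, occurs P t /\ sterm s t = t'.
Proof.
  unfold occurs, squery; simpl. split.
  - intros [H|[a [Ha Ht]]].
    + apply in_map_iff in H. destruct H as [t [<- Ht]]. eauto.
    + apply in_map_iff in Ha. destruct Ha as [b [<- Hb]]. simpl in Ht. apply in_map_iff in Ht.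
      destruct Ht as [t [<- Ht]]. exists t. split; eauto.
  - intros [t [[H|[a [Ha Ht]]] <-]].
    + left. apply in_map; auto.
    + right. exists (satom s a). split; [apply in_map; auto|]. simpl. apply in_map; auto.
Qed.

Lemma mult_bagset_squery_repl P x u D t :
  u <> TVar x -> In x (qvars P) -> (forall w, In w (tvars u) -> In w (qvars P)) ->
  (forall d, sat P D t d -> d x = eval d u) ->
  mult_bagset P D t = mult_bagset (squery (repl x u) P) D t.
Proof.
  intros Hu Hx Hvu Heq. set (P' := squery (repl x u) P).
  assert (Hkeep : forall v, In v (qvars P) -> v <> x -> In v (qvars P')).
  { intros v Hv Hne. apply In_qvars, occurs_squery. exists (TVar v).
    split; [apply In_qvars; auto|]. simpl. unfold repl. destruct (Nat.eqb_spec v x); congruence. }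
  assert (Hvu' : forall w, In w (tvars u) -> In w (qvars P')).
  { intros w Hw. destruct u as [y|c]; simpl in Hw; [|contradiction]. destruct Hw as [<-|[]].
    apply In_qvars, occurs_squery. exists (TVar x). split; [apply In_qvars; auto|].
    simpl. unfold repl. rewrite Nat.eqb_refl. reflexivity. }
  assert (Hvars' : forall v, In v (qvars P') -> (In v (qvars P) /\ v <> x) \/ u = TVar v).
  { intros v Hv. apply In_qvars, occurs_squery in Hv.
    destruct Hv as [[w|c] [Ho Hs]]; simpl in Hs; [|discriminate].
    unfold repl in Hs. destruct (Nat.eqb_spec w x); auto.
    injection Hs as ->. left. split; auto. apply In_qvars; auto. }
  apply Nat.le_antisymm.
  - apply (mult_bagset_le_rel _ _ _ _ _ _ (agree_on (qvars P'))).
    + intros d1 d2 d1' d2' S1 S2 _ _ A' A1 A2 v Hv. destruct (Nat.eq_dec v x) as [->|Hne].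
      * rewrite (Heq d1), (Heq d2) by auto.
        transitivity (eval d1' u); [apply eval_ext; auto|].
        transitivity (eval d2' u); [apply eval_ext; auto|]. symmetry. apply eval_ext; auto.
      * rewrite A1, A', <- A2; auto.
    + intros d Hs. exists d. split; [|intros y _; auto]. apply sat_squery. eapply sat_ext; [|exact Hs].
      intros v _. unfold repl. destruct (Nat.eqb_spec v x); subst; simpl; auto.
  - apply (mult_bagset_le_rel _ _ _ _ _ _
             (fun d' d => forall v, In v (qvars P) -> d v = eval d' (repl x u v))).
    + intros d1' d2' d1 d2 _ _ _ _ A R1 R2 v Hv. destruct (Hvars' v Hv) as [[Hv' Hne]|Hu'].
      * pose proof (R1 v Hv') as E1. pose proof (R2 v Hv') as E2. pose proof (A v Hv') as E.
        unfold repl in E1, E2. destruct (Nat.eqb_spec v x); [contradiction|]. simpl in *. congruence.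
      * pose proof (R1 x Hx) as E1. pose proof (R2 x Hx) as E2. pose proof (A x Hx) as E.
        unfold repl in E1, E2. rewrite Nat.eqb_refl, Hu' in E1, E2. simpl in *. congruence.
    + intros d Hs. exists (fun v => eval d (repl x u v)). split; [apply sat_squery; auto|auto].
Qed.

Lemma bs_sound_step_egd Sigma phi u1 u2 P P' :
  In (EGD phi u1 u2) Sigma -> wf_dep (EGD phi u1 u2) ->
  chase_step (EGD phi u1 u2) P P' -> bs_sound_step Sigma P P'.
Proof.
  intros Hin [W1 W2] Hst. split; [exists (EGD phi u1 u2); auto|].
  intros D HD t. destruct Hst as [h [Hh [Hne Hc]]].
  assert (Hid : forall d, sat P D t d -> eval d (h u1) = eval d (h u2)).
  { intros d Hs. apply (HD _ Hin (fun v => eval d (h v))).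
    intros a Ha. rewrite <- ifact_dinst. apply Hs, Hh; auto. }
  assert (Hocc : forall u, In u (dvars phi) -> forall w, In w (tvars (h u)) -> In w (qvars P))
    by (intros u Hu w Hw; eapply occurs_In_qvars; [apply dhom_occurs with phi|]; eauto).
  destruct Hc as [[x [Hx ->]]|[x [Hx ->]]]; apply mult_bagset_squery_repl.
  - congruence.
  - apply (Hocc u1 W1). rewrite Hx. left; reflexivity.
  - apply Hocc, W2.
  - intros d Hs. rewrite <- (Hid d Hs), Hx. reflexivity.
  - congruence.
  - apply (Hocc u2 W2). rewrite Hx. left; reflexivity.
  - apply Hocc, W1.
  - intros d Hs. rewrite (Hid d Hs), Hx. reflexivity.
Qed.

(** * The canonical database *)

(* Left inverse of [eval (freeze Q)] on the terms of [Q]: values up to the largest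
   constant of [Q] are constants, larger ones come from variables. *)
Definition unfreeze (Q : query) (c : nat) : term :=
  if c <=? list_max (qconsts Q) then TCst c else TVar (c - S (list_max (qconsts Q))).

Lemma unfreeze_eval_freeze Q t : occurs Q t -> unfreeze Q (eval (freeze Q) t) = t.
Proof.
  unfold unfreeze, freeze, eval. destruct t as [x|c]; intros H.
  - destruct (Nat.leb_spec (S (list_max (qconsts Q) + x)) (list_max (qconsts Q))); [lia|].
    f_equal; lia.
  - assert (Hc : c <= list_max (qconsts Q)).
    { apply le_list_max. unfold qconsts. apply in_or_app. destruct H as [H|[a [Ha Ht]]].
      - left. apply in_flat_map. exists (TCst c). simpl; auto.
      - right. apply in_flat_map. exists a. split; auto. apply in_flat_map. exists (TCst c). simpl; auto. }
    destruct (Nat.leb_spec c (list_max (qconsts Q))); [reflexivity|lia].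
Qed.

Lemma dhom_canon h phi Q : dhom h phi (qbody Q) ->
  forall a, In a phi -> In (dfact (fun v => eval (freeze Q) (h v)) a) (canon Q).
Proof. intros Hh a Ha. rewrite <- ifact_dinst. apply in_map, Hh, Ha. Qed.

Lemma canon_dinst Q h' b : In (dfact h' b) (canon Q) ->
  In (dinst (fun x => unfreeze Q (h' x)) b) (qbody Q).
Proof.
  intros H. apply in_map_iff in H. destruct H as [[p args] [Hc Hin]].
  unfold ifact, dfact in Hc. simpl in Hc. injection Hc as Ep Ea.
  replace (dinst _ b) with (mkAtom p args); auto. unfold dinst. f_equal; auto.
  rewrite <- map_map, <- Ea, map_map. rewrite <- (map_id args) at 1. apply map_ext_in.
  intros t Ht. symmetry. apply unfreeze_eval_freeze. right. exists (mkAtom p args); auto.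
Qed.

Lemma sterm_repl th x w : sterm th (TVar x) = sterm th w -> forall v, sterm th (repl x w v) = th v.
Proof. intros E v. unfold repl. destruct (Nat.eqb_spec v x); subst; auto. Qed.

Lemma hom_chase_step_egd phi u1 u2 Q1 Q2 th P :
  chase_step (EGD phi u1 u2) Q1 Q2 -> hom_by th Q1 P ->
  (forall h, dhom h phi (qbody Q1) -> sterm th (h u1) = sterm th (h u2)) -> hom Q2 P.
Proof.
  intros [h [Hh [_ [[x [Hx ->]]|[x [Hx ->]]]]]] Hth Hid;
    apply (hom_by_squery _ th _ _); auto; apply sterm_repl; rewrite <- Hx; auto.
  symmetry; auto.
Qed.

Lemma sigma_step_hom_into_model Sigma QS Q1 Q2 :
  satisfies_all (canon QS) Sigma -> (forall d, In d Sigma -> wf_dep d) ->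
  sigma_step Sigma Q1 Q2 -> hom Q1 QS -> hom Q2 QS.
Proof.
  intros Hsat Hwf [d [Hd Hst]] [th Hth]. pose proof (Hsat d Hd) as HD.
  destruct d as [phi psi|phi u1 u2].
  - apply chase_step_tgd in Hst. destruct Hst as [h [g [Happ [-> _]]]].
    pose proof (dhom_hom_by h phi Q1 QS th (proj1 Happ) Hth) as Hh2.
    destruct (HD _ (dhom_canon _ _ _ Hh2)) as [h' [Hphi Hpsi]].
    apply (hom_tgd_apply Q1 phi psi h g Happ th QS (fun x => unfreeze QS (h' x))); auto.
    + intros x Hx. rewrite Hphi by exact Hx. apply unfreeze_eval_freeze.
      apply (dhom_occurs (fun v => sterm th (h v)) phi); auto.
    + intros b Hb. apply canon_dinst, Hpsi, Hb.
  - apply (hom_chase_step_egd phi u1 u2 Q1 Q2 th QS Hst Hth). intros h Hh.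
    destruct (Hwf _ Hd) as [W1 W2].
    pose proof (dhom_hom_by h phi Q1 QS th Hh Hth) as Hh2.
    rewrite <- (unfreeze_eval_freeze QS (sterm th (h u1))), <- (unfreeze_eval_freeze QS (sterm th (h u2)))
      by (apply (dhom_occurs (fun v => sterm th (h v)) phi); auto).
    f_equal. exact (HD _ (dhom_canon _ _ _ Hh2)).
Qed.

Lemma hom_into_set_chase_result Sigma Q QS Q' :
  (forall d, In d Sigma -> wf_dep d) -> set_chase_result Sigma Q QS ->
  clos_refl_trans query (sigma_step Sigma) Q Q' -> hom Q' QS.
Proof.
  intros Hwf [Hrt Hs] H. apply clos_rt_rtn1 in H. induction H as [|Q1 Q2 Hst _ IH].
  - exact (clos_rt_hom _ _ _ (sigma_step_hom Sigma) Hrt).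
  - exact (sigma_step_hom_into_model Sigma QS Q1 Q2 Hs Hwf Hst IH).
Qed.

(** * Comparing the chases *)

Lemma bs_sound_step_tgd_transfer SR Sigma Q1 P phi psi h g g2 th :
  In (TGD phi psi) Sigma -> tgd_application Q1 phi psi h g ->
  (forall D, bag_ok SR D -> satisfies_all D Sigma ->
     forall t, mult_bag Q1 D t = mult_bag (tgd_apply Q1 psi g) D t) ->
  hom_by th Q1 P -> tgd_application P phi psi (fun v => sterm th (h v)) g2 ->
  ~ (exists h', (forall x, In x (dvars phi) -> h' x = sterm th (h x)) /\
                dhom h' (phi ++ psi) (qbody P)) ->
  bs_sound_step Sigma P (tgd_apply P psi g2).
Proof.
  intros Hin Happ Hsound Hth Happ2 Hnot. split.
  - exists (TGD phi psi). split; [exact Hin|].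
    destruct Happ2 as [Hh2 [G1 [G2 G3]]].
    exists (fun v => sterm th (h v)). split; [exact Hh2|]. split; [exact Hnot|].
    exists g2. repeat split; auto.
  - intros D HD t. apply (mult_bagset_tgd_apply_iff P phi psi _ g2 Happ2); [apply HD, Hin|].
    apply (unique_ext_hom_by Q1 P phi psi h g g2 th); auto.
    eapply unique_ext_of_mult_bag_eq; eauto.
Qed.

Lemma b_sound_step_hom_into_bs_result SR Sigma QS QBS Q1 Q2 :
  (forall d, In d Sigma -> wf_dep d) -> satisfies_all (canon QS) Sigma -> hom QBS QS ->
  ~ (exists Q'', bs_sound_step Sigma QBS Q'') ->
  b_sound_step SR Sigma Q1 Q2 -> hom Q1 QBS -> hom Q2 QBS.
Proof.
  intros Hwf Hcan [sg Hsg] Hmax [[[d [Hd Hst]]|Hdup] Hsound] [th Hth].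
  2:{ eapply hom_trans; [exact (proj2 (dup_removal_hom SR Q1 Q2 Hdup))|exists th; exact Hth]. }
  destruct d as [phi psi|phi u1 u2].
  - apply chase_step_tgd in Hst. destruct Hst as [h [g [Happ [-> _]]]].
    pose proof (dhom_hom_by h phi Q1 QBS th (proj1 Happ) Hth) as Hh2.
    destruct (classic (exists h', (forall x, In x (dvars phi) -> h' x = sterm th (h x)) /\
                                  dhom h' (phi ++ psi) (qbody QBS))) as [[h' [Hphi Hpsi]]|Hnot].
    + apply (hom_tgd_apply Q1 phi psi h g Happ th QBS h' Hth Hphi).
      intros b Hb. apply Hpsi, in_or_app. right; exact Hb.
    + exfalso. destruct (tgd_application_fresh_vars QBS phi psi _ Hh2) as [g2 Happ2].
      apply Hmax. exists (tgd_apply QBS psi g2).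
      exact (bs_sound_step_tgd_transfer SR Sigma Q1 QBS phi psi h g g2 th Hd Happ Hsound Hth Happ2 Hnot).
  - apply (hom_chase_step_egd phi u1 u2 Q1 Q2 th QBS Hst Hth). intros h Hh.
    pose proof (dhom_hom_by h phi Q1 QBS th Hh Hth) as Hh2.
    set (h2 := fun v => sterm th (h v)) in Hh2. change (h2 u1 = h2 u2).
    apply NNPP. intros Hne.
    assert (Hstep : forall P', chase_step (EGD phi u1 u2) QBS P' -> False)
      by (intros P' HP'; apply Hmax; exists P'; apply (bs_sound_step_egd Sigma phi u1 u2); auto).
    destruct (h2 u1) as [x1|c1] eqn:E1; [|destruct (h2 u2) as [x2|c2] eqn:E2].
    + apply (Hstep (squery (repl x1 (h2 u2)) QBS)). exists h2. split; [exact Hh2|].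
      rewrite E1. split; [exact Hne|]. left. eauto.
    + apply (Hstep (squery (repl x2 (TCst c1)) QBS)). exists h2. split; [exact Hh2|].
      rewrite E1, E2. split; [exact Hne|]. right. eauto.
    + (* Two distinct constants would violate the egd in the model [canon QS]. *)
      apply Hne. f_equal.
      pose proof (Hcan _ Hd _ (dhom_canon _ _ _ (dhom_hom_by h2 phi QBS QS sg Hh2 Hsg))) as E.
      simpl in E. rewrite E1, E2 in E. exact E.
Qed.

Theorem proposition6p2 (SR : nat -> bool) (Sigma : list dependency)
  (Q QS QBS QB : query) :
  safe Q ->
  (forall d, In d Sigma -> wf_dep d) ->
  regularized Sigma ->
  set_chase_result Sigma Q QS ->
  bs_chase_result Sigma Q QBS ->
  b_chase_result SR Sigma Q QB ->
  set_contained QS QBS /\ set_contained QBS QB /\ set_contained QB Q.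
Proof.
  intros _ Hwf _ HS [Hbs Hbsmax] [Hb _].
  assert (Hbs_set : clos_refl_trans query (sigma_step Sigma) Q QBS)
    by (apply (clos_rt_mono (bs_sound_step Sigma)); [intros x y []; auto|exact Hbs]).
  assert (Hb_hom : forall A B, b_sound_step SR Sigma A B -> hom A B)
    by (intros A B [[H|H] _]; [eapply sigma_step_hom; eauto|exact (proj1 (dup_removal_hom SR A B H))]).
  assert (HBS_S : hom QBS QS) by (eapply hom_into_set_chase_result; eauto).
  split; [|split]; apply hom_set_contained.
  - exact HBS_S.
  - apply clos_rt_rtn1 in Hb. induction Hb as [|Q1 Q2 Hst _ IH].
    + exact (clos_rt_hom _ _ _ (sigma_step_hom Sigma) Hbs_set).
    + exact (b_sound_step_hom_into_bs_result SR Sigma QS QBS Q1 Q2 Hwf (proj2 HS) HBS_S Hbsmax Hst IH).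
  - exact (clos_rt_hom _ _ _ Hb_hom Hb).
Qed.
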